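(* A metrizable space $X$ satisfies $S_1(\mathcal{K}_{\Omega},\mathcal{K}_{\Omega})$ if and only if $vet_1(Q_p(X,\mathbb{D}))=\omega$.
   Context: A function $f:X\to Y$ is quasicontinuous if for every $x\in X$, every open $V\ni f(x)$ and every open $U\ni x$ there is a nonempty open $W\subseteq U$ with $f(W)\subseteq V$. $Q_p(X,\mathbb{D})$ is the space of quasicontinuous functions from $X$ to the discrete space $\mathbb{D}=\{0,1\}$ with the topology of pointwise convergence. $\mathcal{K}_\Omega$ is the set of families $\mathcal{U}$ of open subsets of $X$ with $X=\bigcup\{\overline{U}:U\in\mathcal{U}\}$, no element of $\mathcal{U}$ dense in $X$, and for each finite $F\subseteq X$ some $U\in\mathcal{U}$ with $F\subseteq\overline{U}$. $S_1(\mathcal{A},\mathcal{B})$: for every sequence $(A_n)_{n\in\mathbb{N}}$ of elements of $\mathcal{A}$ there are $b_n\in A_n$ with $\{b_n:n\in\mathbb{N}\}\in\mathcal{B}$. $vet_1(Z)=\omega$ means: for every $z\in Z$ and every sequence $(A_n)_{n\in\omega}$ of subsets of $Z$ with $z\in\bigcap_n\overline{A_n}$ there are $a_n\in A_n$ with $z\in\overline{\{a_n:n\in\omega\}}$. *)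

From HB Require Import structures.
From mathcomp Require Import all_boot all_order all_algebra.
From mathcomp Require Import all_classical all_reals.
From mathcomp Require Import topology function_spaces.
From Stdlib Require Import Reals.

Set Implicit Arguments.
Unset Strict Implicit.
Unset Printing Implicit Defensive.

Local Open Scope classical_set_scope.

Definition metrizable (X : topologicalType) : Prop :=
  exists d : X -> X -> R,
    (forall x y, Rle 0 (d x y)) /\
    (forall x y, d x y = R0 <-> x = y) /\
    (forall x y, d x y = d y x) /\
    (forall x y z, Rle (d x z) (Rplus (d x y) (d y z))) /\
    (forall U : set X, open U <->
       (forall x, U x -> exists e : R, Rlt 0 e /\
          (forall y, Rlt (d x y) e -> U y))).

Definition quasicontinuous (X Y : topologicalType) (f : X -> Y) : Prop :=
  forall (x : X) (V : set Y) (U : set X),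
    open V -> V (f x) -> open U -> U x ->
    exists W : set X, [/\ open W, W !=set0, W `<=` U & f @` W `<=` V].

Definition K_Omega (X : topologicalType) (calU : set (set X)) : Prop :=
  [/\ (forall U, calU U -> open U),
      \bigcup_(U in calU) closure U = setT,
      (forall U, calU U -> closure U <> setT) &
      (forall F : set X, finite_set F ->
         exists2 U, calU U & F `<=` closure U)].

Definition S1 (X : Type) (calA calB : set (set (set X))) : Prop :=
  forall An : nat -> set (set X), (forall n, calA (An n)) ->
    exists b : nat -> set X, (forall n, An n (b n)) /\ calB (range b).

(* The underlying set of Q_p(X, D): quasicontinuous maps X -> {0,1}
   (bool with its discrete topology), as a subset of the pointwise
   (product) topology space {ptws X -> bool}. *)
Definition Qp (X : topologicalType) : set {ptws X -> bool} :=
  [set f | quasicontinuous (f : X -> bool)].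

(* vet_1(Z) = omega for a subspace Z of a topological space T.
   Closure in the subspace Z of A ⊆ Z is (closure A) ∩ Z, and the points
   considered lie in Z, so ambient closures may be used. *)
Definition vet1_omega (T : topologicalType) (Z : set T) : Prop :=
  forall z, Z z ->
  forall A : nat -> set T, (forall n, A n `<=` Z) ->
    (forall n, closure (A n) z) ->
    exists a : nat -> T, (forall n, A n (a n)) /\ closure (range a) z.

From mathcomp Require Import all_boot all_classical topology function_spaces.
From Stdlib Require Import Reals Lra.

(* The closure of an open set U is recorded by the quasicontinuous indicator of
   closure U, and a family of open sets has the finite-cover property of K_Omega
   exactly when these indicators accumulate at the constant function true; this
   gives vet_1 => S_1 at that point.
   Conversely, let sets A_n of quasicontinuous functions accumulate at a
   quasicontinuous f (for finite X the topology of pointwise convergence is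
   discrete and there is nothing to prove). Quasicontinuity of f and of a g in
   A_n agreeing with f on a finite set F yields small open pieces around F;
   their union O is not dense, and on closure O the function g differs from f
   only at points where f is locally constant but which lie within 1/(n+1) of a
   point where f is not. These O form a K_Omega family. A K_Omega selection O_n
   covers each finite F for infinitely many n, and the points of F where f is
   locally constant are at positive distance from those where it is not, so for
   large such n the g_n attached to O_n agrees with f on F. *)

Local Open Scope classical_set_scope.

Section RealSequences.
Local Open Scope R_scope.

Lemma inv_INR_S_gt0 (n : nat) : 0 < / INR n.+1.
Proof. by apply: Rinv_0_lt_compat; apply: lt_0_INR; apply/PeanoNat.Nat.lt_0_succ. Qed.

Lemma inv_INR_S_le {n m : nat} : (n <= m)%nat -> / INR m.+1 <= / INR n.+1.
Proof.
move=> /leP nm; apply: Rinv_le_contravar; first exact/lt_0_INR/PeanoNat.Nat.lt_0_succ.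
by apply: le_INR; apply: le_n_S.
Qed.

Lemma inv_INR_S_lt {e : R} : 0 < e -> exists n, / INR n.+1 < e.
Proof.
move=> e_gt0; have [n [ne n_gt0]] := archimed_cor1 e e_gt0.
exists n; apply: Rle_lt_trans ne; apply: Rinv_le_contravar; first exact: lt_0_INR n_gt0.
by apply: le_INR; apply: le_S.
Qed.

Lemma nonincreasing_minorant (r : nat -> R) : (forall m, 0 < r m) ->
  exists s : nat -> R, (forall m, 0 < s m /\ s m <= r m) /\
    forall k m, (k <= m)%nat -> s m <= s k.
Proof.
move=> r_gt0.
pose s := fix s m := if m is k.+1 then Rmin (s k) (r k.+1) else r O.
exists s; split.
  elim=> [|k [sk_gt0 _]]; first by split; [exact: r_gt0|exact: Rle_refl].
  by split; [exact: Rmin_pos|exact: Rmin_r].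
move=> k; elim=> [|m IHm]; first by rewrite leqn0 => /eqP ->; apply: Rle_refl.
rewrite leq_eqVlt => /orP [/eqP <-|]; first exact: Rle_refl.
by rewrite ltnS => /IHm; apply: Rle_trans; apply: Rmin_l.
Qed.

End RealSequences.

Lemma finite_set_uniform_index (T : eqType) (G : set T) (P : T -> nat -> Prop) :
  finite_set G -> (forall x m n, (m <= n)%nat -> P x m -> P x n) ->
  (forall x, G x -> exists n, P x n) -> exists n, forall x, G x -> P x n.
Proof.
move=> /finite_seqP [s ->] P_mono; elim: s => [|a s IHs] P_ex; first by exists 0%N.
have [na Pa] := P_ex a (mem_head a s).
have [ns Ps] : exists n, forall x, [set` s] x -> P x n.
  by apply: IHs => x xs; apply: P_ex; rewrite /= inE xs orbT.
exists (maxn na ns) => x; rewrite /= inE => /orP [/eqP ->|xs].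
  exact: P_mono (leq_maxl _ _) Pa.
exact: P_mono (leq_maxr _ _) (Ps x xs).
Qed.

Lemma exists_notin_finite_set {T : Type} {F : set T} :
  ~ finite_set [set: T] -> finite_set F -> exists p, ~ F p.
Proof.
move=> infT finF; apply: contrapT => /forallNP Fall.
by apply/infT/(sub_finite_set _ finF) => p _; exact: contrapT (Fall p).
Qed.

Lemma closure_bigcup_finite {T : topologicalType} {I : choiceType} {D : set I}
    (W : I -> set T) :
  finite_set D -> closure (\bigcup_(i in D) W i) `<=` \bigcup_(i in D) closure (W i).
Proof.
move=> finD; rewrite [X in _ `<=` X](closure_id _).1; last first.
  by apply: closed_bigcup => // i _; exact: closed_closure.
by apply: closureS => y [i Di Wy]; exists i => //; exact: subset_closure.
Qed.

Section KOmega.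
Context {X : topologicalType}.

Lemma K_Omega_from_finite_covers (calU : set (set X)) :
  (forall U, calU U -> open U) -> (forall U, calU U -> closure U <> setT) ->
  (forall F, finite_set F -> exists2 U, calU U & F `<=` closure U) ->
  K_Omega calU.
Proof.
move=> calU_open calU_nondense calU_cover; split => //.
apply/seteqP; split => // x _; have [U calU_U xU] := calU_cover _ (finite_set1 x).
by exists U => //; exact: xU.
Qed.

Lemma K_Omega_range_cofinal {b : nat -> set X} {F : set X} :
  K_Omega (range b) -> finite_set F ->
  forall N, exists2 n, (N <= n)%nat & F `<=` closure (b n).
Proof.
move=> [_ _ b_nondense b_cover] finF N.
have /choice [y yNb] : forall m, exists y, ~ closure (b m) y.
  move=> m; apply: contrapT => /forallNP b_dense; apply: (b_nondense (b m)).
    by exists m.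
  by apply/seteqP; split => // z _; apply: contrapT; exact: b_dense.
have finFy : finite_set (F `|` y @` `I_N).
  by rewrite finite_setU; split => //; apply: finite_image; exact: finite_II.
have [_ [n _ <-] FyU] := b_cover _ finFy.
exists n; last by move=> x Fx; apply: FyU; left.
by rewrite leqNgt; apply/negP => nN; apply: (yNb n); apply: FyU; right; exists n.
Qed.

End KOmega.

Section Pointwise.
Context {X : topologicalType}.
Implicit Types (A : set {ptws X -> bool}) (z : {ptws X -> bool}) (F : set X).

Definition agree_on F z : set {ptws X -> bool} := [set g | forall x, F x -> g x = z x].

Lemma nbhs_agree_on z F : finite_set F -> nbhs z (agree_on F z).
Proof.
have nbhs_at x : nbhs z (agree_on [set x] z).
  have /(pointwise_cvgP z (nbhs_filter z)) z_z : {ptws, nbhs z --> z} by [].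
  have zx_nbhs : nbhs (z x) [set z x].
    by apply: open_nbhs_nbhs; split => //; apply: discrete_open.
  have zx : nbhs z [set g : {ptws X -> bool} | g x = z x] := z_z x _ zx_nbhs.
  by apply: filterS zx => g gx _ ->.
move=> /finite_seqP [s ->]; elim: s => [|a s IHs]; first exact: filterS filterT.
apply: filterS (filterI (nbhs_at a) IHs) => g [ga gs] x /=.
by rewrite inE => /orP [/eqP ->|xs]; [exact: ga|exact: gs].
Qed.

Lemma ptws_closureP A z :
  closure A z <-> forall F, finite_set F -> exists2 g, A g & agree_on F z g.
Proof.
split=> [Az F finF|A_agree].
  by have [g [Ag zg]] := Az _ (nbhs_agree_on z F finF); exists g.
pose agreeF := filter_from [set F | finite_set F] (agree_on^~ z).
have agreeF_filter : Filter agreeF.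
  apply: filter_from_filter; first by exists set0; exact: finite_set0.
  move=> F1 F2 finF1 finF2; exists (F1 `|` F2); first by rewrite /= finite_setU.
  by move=> g zg; split => x Fx; apply: zg; [left|right].
have agreeF_z : {ptws, agreeF --> z}.
  apply/(pointwise_cvgP z agreeF_filter) => x B /nbhs_singleton Bzx.
  by exists [set x]; [exact: finite_set1|move=> g /(_ x erefl) /= ->].
move=> U /agreeF_z [F finF zU]; have [g Ag zg] := A_agree F finF.
by exists g; split => //; exact: zU.
Qed.

Lemma vet1_omega_finite (Z : set {ptws X -> bool}) :
  finite_set [set: X] -> vet1_omega Z.
Proof.
move=> finX z _ A _ Az; exists (fun=> z); split; last by apply: subset_closure; exists O.
move=> n; have [g Ag zg] := (ptws_closureP _ _).1 (Az n) _ finX.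
by rewrite -(funext (fun x => zg x I)).
Qed.

End Pointwise.

Section Quasicontinuity.
Context {X : topologicalType}.
Implicit Types (f g : X -> bool) (U : set X).

Definition locally_constant_at f x :=
  exists V : set X, [/\ open V, V x & forall v, V v -> f v = f x].

Lemma open_locally_constant_at f : open [set x | locally_constant_at f x].
Proof.
rewrite openE => x [V [oV Vx fV]].
apply: filterS (open_nbhs_nbhs (conj oV Vx)) => v Vv.
by exists V; split => // w Vw; rewrite !fV.
Qed.

Lemma quasicontinuous_cst (b : bool) : quasicontinuous (fun _ : X => b).
Proof.
move=> x V U _ Vb oU Ux; exists U; split => //; first by exists x.
by move=> _ [w _ <-].
Qed.

Definition closure_indicator U : {ptws X -> bool} := fun x => `[< closure U x >].

Lemma quasicontinuous_closure_indicator U :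
  open U -> quasicontinuous (closure_indicator U).
Proof.
move=> oU x V U' oV Vx oU' U'x; rewrite /closure_indicator in Vx *.
have [Ux|Ux] := pselect (closure U x).
- have [w [Uw U'w]] := Ux U' (open_nbhs_nbhs (conj oU' U'x)).
  exists (U `&` U'); split; [exact: openI|by exists w|by move=> ? []|].
  move=> _ [y [Uy _] <-]; move: Vx.
  by rewrite (asboolT Ux) (asboolT (subset_closure Uy)).
- exists (U' `&` ~` closure U); split.
  + by apply: openI => //; apply: closed_openC; exact: closed_closure.
  + by exists x.
  + by move=> ? [].
  + by move=> _ [y [_ Uy] <-]; move: Vx; rewrite (asboolF Ux) (asboolF Uy).
Qed.

Lemma closure_indicators_trueP (calU : set (set X)) :
  closure (closure_indicator @` calU) (fun=> true) <->
  forall F, finite_set F -> exists2 U, calU U & F `<=` closure U.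
Proof.
rewrite ptws_closureP; split=> cover F /cover.
  by move=> [_ [U calU_U <-] FU]; exists U => // x /FU /asboolP.
move=> [U calU_U FU]; exists (closure_indicator U); first by exists U.
by move=> x /FU /asboolP.
Qed.

Lemma quasicontinuous_pair_piece {f g x U} :
  quasicontinuous f -> quasicontinuous g -> open U -> U x ->
  exists W : set X, [/\ open W, W !=set0, W `<=` U,
    (forall w, W w -> g w = g x) & (forall v w, W v -> W w -> f v = f w)].
Proof.
move=> qf qg oU Ux.
have [W1 [oW1 [w1 W1w1] W1U gW1]] := qg x [set g x] U (discrete_open _) erefl oU Ux.
have [W [oW W0 WW1 fW]] := qf w1 [set f w1] W1 (discrete_open _) erefl oW1 W1w1.
exists W; split => //; first by move=> w /WW1 /W1U.
  by move=> w Ww; apply: gW1; exists w => //; exact: WW1.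
have fW1 v : W v -> f v = f w1 by move=> Wv; apply: fW; exists v.
by move=> v w /fW1 -> /fW1 ->.
Qed.

End Quasicontinuity.

Theorem S1_K_Omega_of_vet1 (X : topologicalType) :
  vet1_omega (@Qp X) -> S1 (@K_Omega X) (@K_Omega X).
Proof.
move=> vet1 calU K_calU.
have [calU_open calU_cover] : (forall n U, calU n U -> open U) /\
    (forall n, closure (closure_indicator @` calU n) (fun=> true)).
  by split=> n; case: (K_calU n) => // _ _ _ /closure_indicators_trueP.
have calU_Qp n : closure_indicator @` calU n `<=` @Qp X.
  by move=> _ [U calU_U <-]; exact/quasicontinuous_closure_indicator/(calU_open n).
have [a [calU_a a_true]] :=
  vet1 _ (quasicontinuous_cst true) _ calU_Qp calU_cover.
have /choice [b calU_b] : forall n, exists U, calU n U /\ closure_indicator U = a n.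
  by move=> n; have [U ? <-] := calU_a n; exists U.
exists b; split; first by move=> n; case: (calU_b n).
have range_a : range a = closure_indicator @` range b.
  apply/seteqP; split=> [_ [n _ <-]|_ [_ [n _ <-] <-]].
  - by exists (b n); [exists n|case: (calU_b n)].
  - by exists n; case: (calU_b n).
apply: K_Omega_from_finite_covers.
- by move=> _ [n _ <-]; apply: (calU_open n); case: (calU_b n).
- by move=> _ [n _ <-]; case: (K_calU n) => _ _ + _; apply; case: (calU_b n).
- by apply/closure_indicators_trueP; rewrite -range_a.
Qed.

Section Metric.
Local Open Scope R_scope.
Context {X : topologicalType} (d : X -> X -> R).
Hypotheses (d_ge0 : forall x y, 0 <= d x y)
  (d_eq0 : forall x y, d x y = 0 <-> x = y)
  (dC : forall x y, d x y = d y x)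
  (d_triangle : forall x y z, d x z <= d x y + d y z)
  (open_dP : forall U : set X, open U <->
     (forall x, U x -> exists e : R, 0 < e /\ (forall y, d x y < e -> U y))).

Definition dball x r := [set y | d x y < r].

Lemma dball_center x {r} : 0 < r -> dball x r x.
Proof. by rewrite /dball /= (proj2 (d_eq0 x x) erefl). Qed.

Lemma open_dball x r : open (dball x r).
Proof.
apply/open_dP => y xy; rewrite /dball /= in xy.
by exists (r - d x y); split=> [|z yz]; [lra|rewrite /dball /=; have := d_triangle x y z; lra].
Qed.

Lemma open_subdball {U x} : open U -> U x -> exists e, 0 < e /\ dball x e `<=` U.
Proof. by move=> /open_dP U_open /U_open [e [e_gt0 eU]]; exists e. Qed.

Lemma closure_dballP (A : set X) z :
  closure A z <-> forall e, 0 < e -> exists2 a, A a & d z a < e.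
Proof.
split=> [Az e e_gt0|A_close B].
  have [a [Aa za]] := Az _ (open_nbhs_nbhs (conj (open_dball z e) (dball_center z e_gt0))).
  by exists a.
rewrite nbhsE => -[U [oU Uz] UB]; have [e [e_gt0 eU]] := open_subdball oU Uz.
by have [a Aa za] := A_close e e_gt0; exists a; split => //; exact/UB/eU.
Qed.

Lemma closure_shrinking_dballs {w : nat -> X} {s : nat -> R} {x} :
  (forall m, d x (w m) < / INR m.+1) ->
  (forall m, 0 < s m /\ s m <= / INR m.+1) ->
  (forall k m, (k <= m)%nat -> s m <= s k) ->
  closure (\bigcup_m dball (w m) (s m / 2)) `<=`
    [set x] `|` \bigcup_m dball (w m) (s m).
Proof.
move=> xw /all_and2 [s_gt0 s_inv] s_mono y Wy.
have [->|yx] := pselect (y = x); [by left|right].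
have xy_gt0 : 0 < d x y.
  by case: (Rle_lt_or_eq_dec _ _ (d_ge0 x y)) => // /esym /d_eq0 /esym.
have [M M_small] := inv_INR_S_lt (Rdiv_lt_0_compat _ 4 xy_gt0 ltac:(lra)).
have eps_gt0 : 0 < Rmin (s M / 2) (d x y / 2).
  by apply: Rmin_pos; have := s_gt0 M; lra.
have [u [m _ wu] yu] := (closure_dballP _ y).1 Wy _ eps_gt0; rewrite /dball /= in wu.
have yu_s := Rlt_le_trans _ _ _ yu (Rmin_l (s M / 2) (d x y / 2)).
have yu_xy := Rlt_le_trans _ _ _ yu (Rmin_r (s M / 2) (d x y / 2)).
rewrite dC in yu_s yu_xy.
(* Balls of index m >= M lie within 3 / (2 (M + 1)) of x, too close to reach y;
   the others have radius s m >= s M. *)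
have [Mm|mM] := leqP M m.
- have := inv_INR_S_le Mm; have := s_inv m; have := xw m.
  have := d_triangle x (w m) u; have := d_triangle x u y; lra.
- exists m => //; rewrite /dball /=.
  have := s_mono _ _ (ltnW mM); have := d_triangle (w m) u y; lra.
Qed.

Lemma closure_open_shrink {W0 : set X} {x} : open W0 -> closure W0 x ->
  exists W, [/\ open W, W `<=` W0, closure W x & closure W `<=` [set x] `|` W0].
Proof.
move=> oW0 W0x.
have /choice [w /all_and2 [W0w xw]] : forall m, exists w, W0 w /\ d x w < / INR m.+1.
  by move=> m; have [w ? ?] := (closure_dballP W0 x).1 W0x _ (inv_INR_S_gt0 m); exists w.
have /choice [r /all_and2 [r_gt0 rW0]] :
    forall m, exists r, 0 < r /\ dball (w m) r `<=` W0.
  by move=> m; exact: open_subdball oW0 (W0w m).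
have [s [s_le s_mono]] := @nonincreasing_minorant (fun m => Rmin (r m) (/ INR m.+1))
  (fun m => Rmin_pos _ _ (r_gt0 m) (inv_INR_S_gt0 m)).
have s_gt0 m : 0 < s m by case: (s_le m).
have s_r m : s m <= r m.
  by case: (s_le m) => _; have := Rmin_l (r m) (/ INR m.+1); lra.
have s_inv m : 0 < s m /\ s m <= / INR m.+1.
  by case: (s_le m) => ? ?; have := Rmin_r (r m) (/ INR m.+1); split => //; lra.
have sub_W0 : \bigcup_m dball (w m) (s m) `<=` W0.
  by move=> u [m _ wu]; apply: (rW0 m); have := s_r m; rewrite /dball /= in wu *; lra.
exists (\bigcup_m dball (w m) (s m / 2)); split.
- by apply: bigcup_open => m _; exact: open_dball.
- move=> u [m _ wu]; apply: sub_W0; exists m => //; rewrite /dball /= in wu *.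
  by have := s_gt0 m; lra.
- apply/closure_dballP => e e_gt0; have [M Me] := inv_INR_S_lt e_gt0.
  exists (w M); last by have := xw M; lra.
  by exists M => //; apply: dball_center; have := s_gt0 M; lra.
- by move=> y /(closure_shrinking_dballs xw s_inv s_mono) [->|/sub_W0]; [left|right].
Qed.

Lemma quasicontinuous_agreement_piece {f g : X -> bool} {x rho} :
  quasicontinuous f -> quasicontinuous g -> g x = f x -> 0 < rho ->
  exists W, [/\ open W, closure W x, W `<=` dball x rho &
    forall y, closure W y -> g y <> f y ->
      [/\ locally_constant_at f y, ~ locally_constant_at f x & d x y < rho]].
Proof.
move=> qf qg gxfx rho_gt0.
have [rho' [rho'_gt0 rho'_le lc_x]] : exists rho', [/\ 0 < rho', rho' <= rho &
    locally_constant_at f x -> forall v, d x v < rho' -> f v = f x].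
  have [[V [oV Vx fV]]|nlc] := pselect (locally_constant_at f x); last first.
    by exists rho; split => //; exact: Rle_refl.
  have [e [e_gt0 eV]] := open_subdball oV Vx.
  exists (Rmin rho e); split; [exact: Rmin_pos|exact: Rmin_l|].
  by move=> _ v xv; apply/fV/eV; rewrite /dball /=; have := Rmin_r rho e; lra.
pose pieces := [set V : set X | [/\ open V, V `<=` dball x rho',
  (forall v, V v -> g v = g x) & (forall v w, V v -> V w -> f v = f w)]].
have oW0 : open (\bigcup_(V in pieces) V) by apply: bigcup_open => V [].
have W0x : closure (\bigcup_(V in pieces) V) x.
  apply/closure_dballP => e e_gt0; have em_gt0 := Rmin_pos _ _ e_gt0 rho'_gt0.
  have [V [oV [v Vv] Vx gV fV]] :=
    quasicontinuous_pair_piece qf qg (open_dball x _) (dball_center x em_gt0).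
  exists v; last by have := Vx v Vv; rewrite /dball /=; have := Rmin_l e rho'; lra.
  exists V => //; split => // u /Vx; rewrite /dball /=; have := Rmin_r e rho'; lra.
have [W [oW WW0 Wx W_sub]] := closure_open_shrink oW0 W0x.
exists W; split => //.
  by move=> v /WW0 [V [_ Vx _ _] Vv]; have := Vx v Vv; rewrite /dball /=; lra.
move=> y Wy gfy; have [yx|[V [oV Vx gV fV] Vy]] := W_sub y Wy.
  by case: gfy; rewrite yx.
have xy_lt : d x y < rho' by exact: Vx.
split; last lra.
- by exists V; split => // v Vv; exact: fV.
- by move=> /lc_x fx; apply: gfy; rewrite gV // gxfx (fx y xy_lt).
Qed.

Definition near_discontinuity (f : X -> bool) r y :=
  locally_constant_at f y /\ exists2 b, ~ locally_constant_at f b & d b y < r.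

Lemma near_discontinuity_le {f r r' y} :
  r <= r' -> near_discontinuity f r y -> near_discontinuity f r' y.
Proof. by move=> rr' [lc [b nlc br]]; split => //; exists b => //; lra. Qed.

Lemma finite_set_far_from_discontinuity f {F : set X} : finite_set F ->
  exists N, forall y, F y -> ~ near_discontinuity f (/ INR N.+1) y.
Proof.
move=> finF; apply: finite_set_uniform_index => // [y m n mn fm|y _].
  by move=> /(near_discontinuity_le (inv_INR_S_le mn)).
have [lc|nlc] := pselect (locally_constant_at f y); last by exists O => -[].
have [e [e_gt0 e_lc]] := open_subdball (open_locally_constant_at f) lc.
have [N Ne] := inv_INR_S_lt e_gt0.
by exists N => -[_ [b nlc bN]]; apply/nlc/e_lc; rewrite /dball /= dC; lra.
Qed.

Lemma finite_set_nondense_dballs {F : set X} {p} : finite_set F -> ~ F p ->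
  exists2 rho, 0 < rho &
    forall O, O `<=` \bigcup_(x in F) dball x rho -> ~ closure O p.
Proof.
move=> finF Fp.
have [N Np] : exists N, forall x, F x -> / INR N.+1 < d x p / 2.
  apply: finite_set_uniform_index => // [x m n mn|x Fx].
    by have := inv_INR_S_le mn; lra.
  apply: inv_INR_S_lt; have : d x p <> 0 by move=> /d_eq0 xp; apply: Fp; rewrite -xp.
  by have := d_ge0 x p; lra.
exists (/ INR N.+1) => [|O O_sub]; first exact: inv_INR_S_gt0.
move=> /closure_dballP /(_ _ (inv_INR_S_gt0 N)) [u /O_sub [x Fx xu] pu].
have : d x u < / INR N.+1 := xu.
by have := Np x Fx; have := d_triangle x u p; rewrite (dC u p); lra.
Qed.

Definition agreement_covers (f : X -> bool) (A : set {ptws X -> bool}) r :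
    set (set X) :=
  [set O | [/\ open O, closure O <> setT & exists2 g, A g &
     forall y, closure O y -> g y <> f y -> near_discontinuity f r y]].

Lemma K_Omega_agreement_covers {f} {A : set {ptws X -> bool}} r :
  ~ finite_set [set: X] -> quasicontinuous f -> A `<=` @Qp X -> closure A f ->
  0 < r -> K_Omega (agreement_covers f A r).
Proof.
move=> infX qf AQ Af r_gt0.
apply: K_Omega_from_finite_covers => [O []|O []|F finF] //.
have [g Ag gf] := (ptws_closureP _ _).1 Af _ finF.
have [p Fp] := exists_notin_finite_set infX finF.
have [rho rho_gt0 nondense] := finite_set_nondense_dballs finF Fp.
have /choice [W W_piece] : forall x, exists W, F x ->
    [/\ open W, closure W x, W `<=` dball x (Rmin r rho) &
    forall y, closure W y -> g y <> f y ->
      [/\ locally_constant_at f y, ~ locally_constant_at f x & d x y < Rmin r rho]].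
  move=> x; have [Fx|nFx] := pselect (F x); last by exists set0 => /nFx.
  have [W ?] := quasicontinuous_agreement_piece qf (AQ g Ag) (gf x Fx)
    (Rmin_pos _ _ r_gt0 rho_gt0).
  by exists W.
exists (\bigcup_(x in F) W x); last first.
  move=> x Fx; have [_ Wx _ _] := W_piece x Fx.
  by apply: closureS Wx; exact: bigcup_sup.
split.
- by apply: bigcup_open => x /W_piece [].
- move=> dense; apply: (nondense (\bigcup_(x in F) W x)); last by rewrite dense.
  move=> u [x Fx Wu]; exists x => //; have [_ _ W_dball _] := W_piece x Fx.
  by have := W_dball u Wu; rewrite /dball /=; have := Rmin_r r rho; lra.
- exists g => // y /(closure_bigcup_finite W finF) [x Fx Wy] gfy.
  have [_ _ _ /(_ y Wy gfy) [lc_y nlc_x xy]] := W_piece x Fx.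
  by split => //; exists x => //; have := Rmin_l r rho; lra.
Qed.

Theorem vet1_of_S1_K_Omega : S1 (@K_Omega X) (@K_Omega X) -> vet1_omega (@Qp X).
Proof.
move=> S1K; have [finX|infX] := pselect (finite_set [set: X]).
  exact: vet1_omega_finite.
move=> f qf A AQ Af.
have [O [O_cover K_O]] := S1K _ (fun n => K_Omega_agreement_covers (/ INR n.+1)
  infX qf (AQ n) (Af n) (inv_INR_S_gt0 n)).
have /choice [a /all_and2 [Aa a_agree]] : forall n, exists g, A n g /\
    forall y, closure (O n) y -> g y <> f y -> near_discontinuity f (/ INR n.+1) y.
  by move=> n; have [_ _ [g Ag ?]] := O_cover n; exists g.
exists a; split => //; apply/ptws_closureP => F finF.
have [N N_far] := finite_set_far_from_discontinuity f finF.
have [n Nn FOn] := K_Omega_range_cofinal K_O finF N.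
exists (a n); first by exists n.
move=> x Fx; apply: contrapT => afx; apply: (N_far x Fx).
exact: near_discontinuity_le (inv_INR_S_le Nn) (a_agree n x (FOn x Fx) afx).
Qed.

End Metric.

Theorem corollary4p2 (X : topologicalType) :
  metrizable X ->
  (S1 (@K_Omega X) (@K_Omega X) <-> vet1_omega (@Qp X)).
Proof.
move=> [d [d_ge0 [d_eq0 [dC [d_triangle open_dP]]]]]; split.
- exact: vet1_of_S1_K_Omega d_ge0 d_eq0 dC d_triangle open_dP.
- exact: S1_K_Omega_of_vet1.
Qed.
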